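(* Let $n$ be odd, let $A=S(n)$, and let $p'$ be a prime divisor of $n$ with $v_{p'}(n)\geq 2$. Let $n'=n/p'$ and let $f:U(n)\to U(n')$ be the natural map. Then $L(n';p')\subseteq f(A)$.
   Context: $U(m)$ is the unit group of $\mathbb{Z}_m$; $v_p(n)=r$ means $p^r\mid n$ and $p^{r+1}\nmid n$. For odd $m=\prod p_i^{r_i}$, prime $p\mid m$ and $a\in U(m)$, $\left(\frac{a}{p}\right)$ is the Legendre symbol of the image of $a$ mod $p$, $\left(\frac{a}{m}\right)=\prod\left(\frac{a}{p_i}\right)^{r_i}$, $S(m)$ is the kernel of $a\mapsto\left(\frac{a}{m}\right)$ on $U(m)$, and $L(m;p')=\{a\in U(m):\left(\frac{a}{m}\right)=\left(\frac{a}{p'}\right)\}$ for a prime $p'\mid m$. The natural map $U(n)\to U(n')$ is induced by $a+n\mathbb{Z}\mapsto a+n'\mathbb{Z}$. *)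

From mathcomp Require Import all_boot all_order all_algebra.
Set Implicit Arguments. Unset Strict Implicit. Unset Printing Implicit Defensive.
Import GRing.Theory Num.Theory.

(* Elements of U(m) = (Z/mZ)^x are represented by their canonical
   representatives a with 0 <= a < m and gcd(a, m) = 1. *)
Definition inU (m a : nat) : bool := (a < m) && coprime a m.

Definition legendre (p a : nat) : int :=
  if p %| a then 0%R
  else if [exists x : 'I_p, (x * x) %% p == a %% p] then 1%R else (-1)%R.

Definition jacobi (m a : nat) : int :=
  (\prod_(p <- primes m) legendre p a ^+ logn p m)%R.

Definition Sset (m : nat) : pred nat :=
  [pred a | inU m a && (jacobi m a == 1%R)].

Definition Lset (m p' : nat) : pred nat :=
  [pred a | inU m a && (jacobi m a == legendre p' a)].

Definition natmap (n' a : nat) : nat := a %% n'.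

(* The preimage can be taken to be b itself, since b < n' < n.  The Jacobi
   symbol is multiplicative in the modulus, so (b/n) = (b/n')(b/p') = (b/p')^2,
   and (b/p') = ±1 because v_p'(n) >= 2 makes p' divide n', hence b is prime
   to p'. *)
From mathcomp Require Import all_boot all_order all_algebra.
Import GRing.Theory.

Lemma legendre_sqr (p a : nat) : ~~ (p %| a) -> (legendre p a ^+ 2 = 1)%R.
Proof. by rewrite /legendre => /negbTE ->; case: ifP. Qed.

Lemma jacobiE (m a N : nat) : m < N ->
  jacobi m a = (\prod_(0 <= p < N | prime p) legendre p a ^+ logn p m)%R.
Proof.
move=> ltmN; set F := fun p => (legendre p a ^+ logn p m)%R.
have -> : (\prod_(0 <= p < N | prime p) F p
           = \prod_(0 <= p < N | p \in primes m) F p)%R.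
  rewrite big_mkcond [RHS]big_mkcond; apply: eq_bigr => p _ /=.
  have [pm | pNm] := boolP (p \in primes m).
    by rewrite (allP (all_prime_primes m) p pm).
  rewrite -logn_gt0 lt0n negbK in pNm.
  by rewrite /F (eqP pNm) expr0; case: ifP.
rewrite -big_filter /jacobi; apply: perm_big.
apply: uniq_perm; rewrite ?primes_uniq ?filter_uniq ?iota_uniq // => p.
rewrite mem_filter mem_iota add0n subn0 /=; apply/esym/andb_idr.
rewrite mem_primes => /and3P[_ m_gt0 /(dvdn_leq m_gt0) le_pm].
exact: leq_ltn_trans ltmN.
Qed.

Lemma jacobiM (m k a : nat) : 0 < m -> 0 < k ->
  jacobi (m * k) a = (jacobi m a * jacobi k a)%R.
Proof.
move=> m_gt0 k_gt0.
have ltm : m < (m * k).+1 by rewrite ltnS leq_pmulr.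
have ltk : k < (m * k).+1 by rewrite ltnS leq_pmull.
rewrite (jacobiE _ a _ (ltnSn _)) (jacobiE _ a _ ltm) (jacobiE _ a _ ltk).
by rewrite -big_split; apply: eq_bigr => p _; rewrite lognM // exprD.
Qed.

Lemma jacobi_prime (p a : nat) : prime p -> jacobi p a = legendre p a.
Proof.
by move=> p_pr; rewrite /jacobi primes_prime // big_seq1 logn_prime // eqxx.
Qed.

Theorem lemma4p1 (n p' : nat) :
  odd n -> prime p' -> p' %| n -> 2 <= logn p' n ->
  forall b, b \in Lset (n %/ p') p' ->
  exists2 a, a \in Sset n & natmap (n %/ p') a = b.
Proof.
move=> _ p'_pr p'_dvd_n logn_ge2 b.
set n' := n %/ p'.
have n_gt0 : 0 < n by rewrite lt0n; apply: contraTneq logn_ge2 => ->; rewrite logn0.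
have p'_gt0 : 0 < p' := prime_gt0 p'_pr.
have def_n : n = n' * p' by rewrite divnK.
have n'_gt0 : 0 < n' by move: n_gt0; rewrite def_n muln_gt0 => /andP[].
have p'_dvd_n' : p' %| n'.
  have : p' ^ 2 %| n by rewrite pfactor_dvdn.
  by rewrite def_n expnS mulnC dvdn_pmul2r.
rewrite !inE /inU => /andP[/andP[lt_bn' cop_bn'] /eqP jac_b].
have cop_bp' : coprime b p' by apply: coprime_dvdr p'_dvd_n' cop_bn'.
exists b; last by rewrite /natmap modn_small.
have lt_bn : b < n' * p' by rewrite (leq_trans lt_bn') ?leq_pmulr.
rewrite !inE /inU def_n lt_bn coprimeMr cop_bn' cop_bp' /=.
rewrite jacobiM // (jacobi_prime _ b p'_pr) jac_b -expr2 legendre_sqr //.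
by rewrite -prime_coprime // coprime_sym.
Qed.
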